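(* Let $\varphi$ be an endomorphism of an abelian group $A$. Suppose that either there is a $\varphi$-invariant subgroup $A_0$ of finite index in $A$ such that the restriction of $\varphi$ to $A_0$ is inertial (resp. left-inertial), or there is a finite $\varphi$-invariant subgroup $F$ of $A$ such that the endomorphism of $A/F$ induced by $\varphi$ is inertial (resp. left-inertial). Then $\varphi$ is inertial (resp. left-inertial) on $A$.
   Context: Abelian groups are written additively. An endomorphism $\varphi$ of $A$ is inertial if $(\varphi(X)+X)/X$ is finite for every subgroup $X\le A$, and left-inertial if $X/(X\cap\varphi(X))$ is finite for every $X\le A$. *)

From HB Require Import structures.
From mathcomp Require Import all_boot all_algebra.
Set Implicit Arguments. Unset Strict Implicit. Unset Printing Implicit Defensive.
Import GRing.Theory.
Local Open Scope ring_scope.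

Definition is_subgroup (A : zmodType) (X : A -> Prop) : Prop :=
  X 0 /\ (forall x y, X x -> X y -> X (x - y)).

Definition finite_set (A : zmodType) (X : A -> Prop) : Prop :=
  exists s : seq A, forall x, X x <-> x \in s.

(* "Y/(Y∩X) is finite": Y is covered by finitely many cosets of X.
   When X ≤ Y this says exactly that the quotient group Y/X is finite. *)
Definition fin_mod (A : zmodType) (Y X : A -> Prop) : Prop :=
  exists s : seq A, forall y, Y y -> exists2 z, z \in s & X (y - z).

Definition img_plus (A : zmodType) (phi : A -> A) (X : A -> Prop) : A -> Prop :=
  fun y => exists x x', [/\ X x, X x' & y = phi x + x'].

Definition cap_img (A : zmodType) (phi : A -> A) (X : A -> Prop) : A -> Prop :=
  fun y => X y /\ exists x, X x /\ y = phi x.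

Definition inertial_on (A : zmodType) (D : A -> Prop) (phi : A -> A) : Prop :=
  forall X : A -> Prop, is_subgroup X -> (forall x, X x -> D x) ->
    fin_mod (img_plus phi X) X.

Definition left_inertial_on (A : zmodType) (D : A -> Prop) (phi : A -> A) : Prop :=
  forall X : A -> Prop, is_subgroup X -> (forall x, X x -> D x) ->
    fin_mod X (cap_img phi X).

Definition inertial (A : zmodType) (phi : A -> A) : Prop :=
  inertial_on (fun _ => True) phi.

Definition left_inertial (A : zmodType) (phi : A -> A) : Prop :=
  left_inertial_on (fun _ => True) phi.

Definition phi_invariant (A : zmodType) (phi : A -> A) (D : A -> Prop) : Prop :=
  forall x, D x -> D (phi x).

(* pi : A -> B is (up to isomorphism) the canonical projection A -> A/F:
   a surjective additive map with kernel exactly F. *)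
Definition is_quotient_map (A B : zmodType) (F : A -> Prop) (pi : A -> B) : Prop :=
  (forall b, exists a, pi a = b) /\ (forall a, pi a = 0 <-> F a).

Definition induced (A B : zmodType) (pi : A -> B) (phi : A -> A) (psi : B -> B) : Prop :=
  forall a, psi (pi a) = pi (phi a).

(** Write [fin_mod Y X] for "Y/(Y ∩ X) is finite".  This relation is
    transitive and monotone, and it is reflected by additive maps with finite
    kernel.  If [A0] has finite index, every subgroup [X] has finite index
    over [X ∩ A0], and the hypothesis on [A0] applies to [X ∩ A0].  If [F] is
    finite, a subgroup is determined by its image in [A/F] up to [F]; the one
    subtlety is that [X ∩ φ(X)] pulls back only to [X ∩ (φ(X) + F)], which
    meets finitely many cosets of [X ∩ φ(X)]: two elements [φ w + f] and
    [φ t + f] of it with the same [f ∈ F] differ by [φ(w - t) ∈ X ∩ φ(X)]. *)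

From HB Require Import structures.
From mathcomp Require Import all_boot all_algebra.
From Stdlib Require Import Classical.
Set Implicit Arguments. Unset Strict Implicit. Unset Printing Implicit Defensive.
Import GRing.Theory.
Local Open Scope ring_scope.

Section Subgroup.
Variables (A : zmodType) (X : A -> Prop).
Hypothesis subX : is_subgroup X.

Lemma subgroup0 : X 0. Proof. by case: subX. Qed.

Lemma subgroupB x y : X x -> X y -> X (x - y).
Proof. by case: subX => _; apply. Qed.

Lemma subgroupN x : X x -> X (- x).
Proof. by move=> Xx; rewrite -sub0r; apply: subgroupB => //; apply: subgroup0. Qed.

Lemma subgroupD x y : X x -> X y -> X (x + y).
Proof. by move=> Xx Xy; rewrite -[y]opprK; apply: subgroupB => //; apply: subgroupN. Qed.

End Subgroup.

Lemma subgroupI (A : zmodType) (X Y : A -> Prop) :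
  is_subgroup X -> is_subgroup Y -> is_subgroup (fun x => X x /\ Y x).
Proof.
move=> subX subY; split; first by split; apply: subgroup0.
by move=> x y [Xx Yx] [Xy Yy]; split; apply: subgroupB.
Qed.

Definition set_image (A B : zmodType) (f : A -> B) (X : A -> Prop) : B -> Prop :=
  fun b => exists2 x, X x & f x = b.

Lemma subgroup_image (A B : zmodType) (f : {additive A -> B}) (X : A -> Prop) :
  is_subgroup X -> is_subgroup (set_image f X).
Proof.
move=> subX; split; first by exists 0; rewrite ?raddf0 //; apply: subgroup0.
move=> _ _ [x Xx <-] [y Xy <-].
by exists (x - y); rewrite ?raddfB //; apply: subgroupB.
Qed.

Lemma seq_witnesses (S T : eqType) (P : S -> T -> Prop) (s : seq S) :
  exists L : seq T,
    forall z, z \in s -> (exists t, P z t) -> exists2 t, t \in L & P z t.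
Proof.
elim: s => [|z s [L HL]]; first by exists [::].
have [[t Pzt]|noP] := classic (exists t, P z t).
- exists (t :: L) => z'; rewrite in_cons => /orP[/eqP-> _|z's exP].
    by exists t; rewrite ?mem_head.
  by have [t' t'L Pt'] := HL z' z's exP; exists t'; rewrite // in_cons t'L orbT.
- exists L => z'; rewrite in_cons => /orP[/eqP-> exP|]; first by case: noP.
  exact: HL.
Qed.

Section FinMod.
Variable A : zmodType.
Implicit Types X Y Z : A -> Prop.

Lemma fin_mod_trans Y Z X : fin_mod Y Z -> fin_mod Z X -> fin_mod Y X.
Proof.
move=> [s HYZ] [t HZX]; exists [seq z + x | z <- s, x <- t].
move=> y /HYZ[z zs /HZX[x xt Hx]].
by exists (z + x); [apply: allpairs_f | rewrite opprD addrA].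
Qed.

Lemma fin_mod_subl Y' Y X :
  (forall y, Y' y -> Y y) -> fin_mod Y X -> fin_mod Y' X.
Proof. by move=> sY'Y [s Hs]; exists s => y /sY'Y/Hs. Qed.

Lemma fin_mod_subr Y X X' :
  (forall x, X x -> X' x) -> fin_mod Y X -> fin_mod Y X'.
Proof. by move=> sXX' [s Hs]; exists s => y /Hs[z zs /sXX']; exists z. Qed.

Lemma fin_mod_meet Y Z X :
  is_subgroup X -> is_subgroup Z -> (forall x, X x -> Y x) ->
  fin_mod Y Z -> fin_mod X (fun x => X x /\ Z x).
Proof.
move=> subX subZ sXY [s Hs].
have [T HT] := seq_witnesses (fun z t => X t /\ Z (t - z)) s.
exists T => x Xx; have [z zs Zxz] := Hs x (sXY x Xx).
have [t tT [Xt Ztz]] := HT z zs (ex_intro _ x (conj Xx Zxz)).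
exists t => //; split; first exact: subgroupB.
have -> : x - t = (x - z) - (t - z) by rewrite opprB addrA subrK.
exact: subgroupB.
Qed.

End FinMod.

Lemma fin_mod_preimage (A B : zmodType) (pi : {additive A -> B})
    (F Y X : A -> Prop) :
  finite_set F -> (forall a, pi a = 0 -> F a) ->
  fin_mod (set_image pi Y) (set_image pi X) -> fin_mod Y X.
Proof.
move=> [sF HF] kerF [s Hs].
have [L HL] := seq_witnesses (fun z a => pi a = z) s.
exists [seq a + f | a <- L, f <- sF] => y Yy.
have [z zs [x Xx pix]] := Hs (pi y) (ex_intro2 _ _ y Yy erefl).
have [a aL pia] : exists2 a, a \in L & pi a = z.
  by apply: HL => //; exists (y - x); rewrite raddfB pix opprB addrC subrK.
have Ff : F (y - a - x) by apply: kerF; rewrite !raddfB pia -pix subrr.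
exists (a + (y - a - x)); first by apply: allpairs_f => //; apply/HF.
by rewrite opprD addrA opprB addrC subrK.
Qed.

Section Endomorphism.
Variables (A : zmodType) (phi : {additive A -> A}).

Lemma fin_mod_img_plus_sub (X X0 : A -> Prop) :
  is_subgroup X -> (forall x, X0 x -> X x) ->
  fin_mod X X0 -> fin_mod (img_plus phi X0) X0 -> fin_mod (img_plus phi X) X.
Proof.
move=> subX sX0X [s Hs] [s1 Hs1].
exists [seq phi t + z | t <- s, z <- s1] => _ [x [x' [Xx Xx' ->]]].
have [t ts X0xt] := Hs x Xx.
have [z zs X0z] : exists2 z, z \in s1 & X0 (phi (x - t) + (x - t) - z).
  by apply: Hs1; exists (x - t), (x - t).
exists (phi t + z); first exact: allpairs_f.
have -> : phi x + x' - (phi t + z) = phi (x - t) + (x - t) - z - (x - t) + x'.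
  by rewrite raddfB [_ + (x - t) - z]addrAC addrK opprD addrA [_ + x' - _]addrAC addrAC.
by apply: (subgroupD subX) => //; apply: (subgroupB subX); apply: sX0X.
Qed.

Lemma fin_mod_cap_img_sub (X X0 : A -> Prop) :
  (forall x, X0 x -> X x) ->
  fin_mod X X0 -> fin_mod X0 (cap_img phi X0) -> fin_mod X (cap_img phi X).
Proof.
move=> sX0X hX hX0; apply: fin_mod_trans hX _; apply: fin_mod_subr hX0.
move=> y [X0y [x [X0x yE]]].
by split; [apply: sX0X | exists x; split; first apply: sX0X].
Qed.

Definition cap_img_add (F X : A -> Prop) : A -> Prop :=
  fun y => X y /\ exists w f, [/\ X w, F f & y = phi w + f].

Lemma fin_mod_cap_img_add (F X : A -> Prop) :
  is_subgroup X -> finite_set F -> fin_mod (cap_img_add F X) (cap_img phi X).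
Proof.
move=> subX [sF HF].
have [T HT] := seq_witnesses (fun f t => X t /\ X (phi t + f)) sF.
exists [seq phi t + f | f <- sF, t <- T] => y [Xy [w [f [Xw Ff yE]]]].
rewrite {}yE in Xy *.
have [t tT [Xt Xtf]] := HT f ((HF f).1 Ff) (ex_intro _ w (conj Xw Xy)).
exists (phi t + f); first by apply: allpairs_f => //; apply/HF.
have Xd : X (phi w + f - (phi t + f)) by apply: subgroupB.
rewrite [phi t + f]addrC addrKA -raddfB in Xd *.
by split=> //; exists (w - t); split; first apply: subgroupB.
Qed.

Lemma inertial_of_fin_index (A0 : A -> Prop) :
  is_subgroup A0 -> fin_mod (fun _ => True) A0 -> inertial_on A0 phi ->
  inertial phi.
Proof.
move=> subA0 idxA0 inA0 X subX _.
have subX0 := subgroupI subX subA0.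
apply: (@fin_mod_img_plus_sub X (fun x => X x /\ A0 x) subX (fun x => @proj1 _ _)).
  exact: fin_mod_meet subX subA0 (fun _ _ => I) idxA0.
exact: inA0 _ subX0 (fun x => @proj2 _ _).
Qed.

Lemma left_inertial_of_fin_index (A0 : A -> Prop) :
  is_subgroup A0 -> fin_mod (fun _ => True) A0 -> left_inertial_on A0 phi ->
  left_inertial phi.
Proof.
move=> subA0 idxA0 inA0 X subX _.
have subX0 := subgroupI subX subA0.
apply: (@fin_mod_cap_img_sub X (fun x => X x /\ A0 x) (fun x => @proj1 _ _)).
  exact: fin_mod_meet subX subA0 (fun _ _ => I) idxA0.
exact: inA0 _ subX0 (fun x => @proj2 _ _).
Qed.

Section Quotient.
Variables (F : A -> Prop) (B : zmodType).
Variables (pi : {additive A -> B}) (psi : {additive B -> B}).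
Hypotheses (finF : finite_set F) (kerF : forall a, pi a = 0 -> F a).
Hypothesis psi_induced : induced pi phi psi.

Lemma inertial_of_quotient : inertial psi -> inertial phi.
Proof.
move=> inpsi X subX _; apply: fin_mod_preimage finF kerF _.
apply: fin_mod_subl (inpsi _ (subgroup_image pi subX) (fun _ _ => I)).
move=> _ [_ [x [x' [Xx Xx' ->]]] <-].
by exists (pi x), (pi x'); split; [exists x | exists x' | rewrite raddfD psi_induced].
Qed.

Lemma left_inertial_of_quotient : left_inertial psi -> left_inertial phi.
Proof.
move=> inpsi X subX _.
apply: fin_mod_trans _ (fin_mod_cap_img_add subX finF).
apply: fin_mod_preimage finF kerF _.
apply: fin_mod_subr (inpsi _ (subgroup_image pi subX) (fun _ _ => I)).
move=> _ [[x Xx <-] [_ [[w Xw <-] pixE]]].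
have Fxw : F (x - phi w) by apply: kerF; rewrite raddfB pixE psi_induced subrr.
exists x => //; split=> //; exists w, (x - phi w).
by split=> //; rewrite addrC subrK.
Qed.

End Quotient.

End Endomorphism.

Theorem proposition2p3 (A : zmodType) (phi : {additive A -> A}) :
  ((exists A0 : A -> Prop,
       [/\ is_subgroup A0, phi_invariant phi A0,
           fin_mod (fun _ => True) A0 & inertial_on A0 phi])
   \/ (exists F : A -> Prop,
       [/\ is_subgroup F, finite_set F, phi_invariant phi F &
         exists (B : zmodType) (pi : {additive A -> B}) (psi : {additive B -> B}),
           [/\ is_quotient_map F pi, induced pi phi psi & inertial psi]])
   -> inertial phi)
  /\
  ((exists A0 : A -> Prop,
       [/\ is_subgroup A0, phi_invariant phi A0,
           fin_mod (fun _ => True) A0 & left_inertial_on A0 phi])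
   \/ (exists F : A -> Prop,
       [/\ is_subgroup F, finite_set F, phi_invariant phi F &
         exists (B : zmodType) (pi : {additive A -> B}) (psi : {additive B -> B}),
           [/\ is_quotient_map F pi, induced pi phi psi & left_inertial psi]])
   -> left_inertial phi).
Proof.
split.
- case=> [[A0 [subA0 _ idxA0 inA0]]|[F [_ finF _ [B [pi [psi [[_ kerF] ind inpsi]]]]]]].
    exact: inertial_of_fin_index subA0 idxA0 inA0.
  exact: inertial_of_quotient finF (fun a => (kerF a).1) ind inpsi.
- case=> [[A0 [subA0 _ idxA0 inA0]]|[F [_ finF _ [B [pi [psi [[_ kerF] ind inpsi]]]]]]].
    exact: left_inertial_of_fin_index subA0 idxA0 inA0.
  exact: left_inertial_of_quotient finF (fun a => (kerF a).1) ind inpsi.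
Qed.
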